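(* Let $(L,\preceq,\bot,\top)$ be a bounded lattice with at least three elements and let $\{K_i\}_{i\in I}$ be a family of blocks of $L$ with $I$ a non-empty index set. If there exists $j\in I$ such that $K_j$ is a complete block and $\bigcup_{i\in I}K_i\subsetneq L$, then $\bigcup_{i\in I}K_i$ is a complete block of $L$.
   Context: For $k\in L$ let ${\uparrow}k=\{x\in L\mid k\preceq x\}$ and ${\downarrow}k=\{x\in L\mid x\preceq k\}$. A block of $L$ is a sublattice $K\subsetneq L$ (a proper subset) such that $K\setminus\{\bot,\top\}\neq\varnothing$ and $({\uparrow}k\cup{\downarrow}k)\setminus\{\bot,\top\}\subseteq K$ for every $k\in K\setminus\{\bot,\top\}$. A block $K$ is complete if $\bot,\top\in K$. *)

From HB Require Import structures.
From mathcomp Require Import all_boot all_order.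
Set Implicit Arguments. Unset Strict Implicit. Unset Printing Implicit Defensive.
Import Order.TTheory.
Local Open Scope order_scope.

Definition is_sublattice (d : Order.disp_t) (L : latticeType d) (K : L -> Prop) : Prop :=
  forall x y : L, K x -> K y -> K (x `&` y) /\ K (x `|` y).

Definition is_block (d : Order.disp_t) (L : tbLatticeType d) (K : L -> Prop) : Prop :=
  [/\ is_sublattice K,
      (exists x : L, ~ K x),
      (exists k : L, [/\ K k, k <> \bot & k <> \top])
    & forall k : L, K k -> k <> \bot -> k <> \top ->
        forall x : L, (k <= x \/ x <= k) -> x <> \bot -> x <> \top -> K x].

Definition is_complete_block (d : Order.disp_t) (L : tbLatticeType d) (K : L -> Prop) : Prop :=
  [/\ is_block K, K \bot & K \top].

From HB Require Import structures.
From mathcomp Require Import all_boot all_order.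
Import Order.TTheory.
Local Open Scope order_scope.

(* Every element comparable to a non-trivial element of some block lies in
   that block, unless it is \bot or \top; a complete block supplies \bot and
   \top.  As x `&` y <= x and x <= x `|` y, this makes the union closed under
   meet and join once x is non-trivial, and x = \bot or x = \top is immediate. *)

Section UnionOfBlocks.

Context {d : Order.disp_t} {L : tbLatticeType d}.

Definition comparable_closed (S : L -> Prop) : Prop :=
  forall k : L, S k -> k <> \bot -> k <> \top ->
    forall x : L, (k <= x \/ x <= k) -> x <> \bot -> x <> \top -> S x.

Lemma block_comparable_closed {K : L -> Prop} :
  is_block K -> comparable_closed K.
Proof. by case. Qed.

Lemma comparable_closed_bigcup {I : Type} (K : I -> L -> Prop) :
  (forall i, comparable_closed (K i)) ->
  comparable_closed (fun x => exists i, K i x).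
Proof.
move=> Kclosed k [i Kk] kb kt x cmp xb xt.
by exists i; apply: (Kclosed i k).
Qed.

Lemma sublattice_comparable_closed (S : L -> Prop) :
  S \bot -> S \top -> comparable_closed S -> is_sublattice S.
Proof.
move=> Sb St Sclosed x y Sx Sy.
have [->|xb] := eqVneq x \bot; first by rewrite meet0x join0x.
have [->|xt] := eqVneq x \top; first by rewrite meet1x join1x.
have S_cmp z : (x <= z \/ z <= x) -> S z.
  move=> cmp.
  have [->|zb] := eqVneq z \bot; first exact: Sb.
  have [->|zt] := eqVneq z \top; first exact: St.
  by apply: (Sclosed x) => //; apply/eqP.
by split; apply: S_cmp; [right; exact: leIl | left; exact: leUl].
Qed.

End UnionOfBlocks.

Theorem proposition17 (d : Order.disp_t) (L : tbLatticeType d)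
  (three : exists a b c : L, [/\ a <> b, a <> c & b <> c])
  (I : Type) (K : I -> L -> Prop)
  (I_nonempty : inhabited I)
  (Kblocks : forall i : I, is_block (K i))
  (j : I) (Kj_complete : is_complete_block (K j))
  (proper : exists x : L, ~ (exists i : I, K i x)) :
  is_complete_block (fun x : L => exists i : I, K i x).
Proof.
case: Kj_complete => [[_ _ [k [Kk kb kt]] _] Kj_bot Kj_top].
have U_bot : exists i, K i \bot by exists j.
have U_top : exists i, K i \top by exists j.
have U_closed := comparable_closed_bigcup K
  (fun i => block_comparable_closed (Kblocks i)).
split=> //; split=> //.
- exact: sublattice_comparable_closed.
- by exists k; split=> //; exists j.
Qed.
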